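(* Let $A=(i_1,\dots,i_{a-1},k)$ and $B=(k,j_2,\dots,j_b)$ be ordered tuples of distinct elements of $I_d$ whose underlying sets intersect exactly in $\{k\}$. Let $\alpha\in\mathbb{Z}_2^{a,\mathrm{ev}}$, $\beta\in\mathbb{Z}_2^{b,\mathrm{ev}}$ and $r,s\ge0$. Let $A\cup B=(i_1,\dots,i_{a-1},k,j_2,\dots,j_b)$. Then in $R_l[x_1,\dots,x_d]$, $$h^\alpha_r(A)\,h^\beta_s(B)=(-1)^{\alpha_a((b-1)(l-1)+s)}\,h^\gamma_{r+s}(A\cup B),$$ where $\gamma=(\alpha_1,\dots,\alpha_{a-1},\beta_1,\dots,\beta_{b-1},\beta_b+\alpha_a)\in\mathbb{Z}_2^{a+b-1,\mathrm{ev}}$.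
   Context: $l,d\ge1$, $R$ a commutative ring, $I_a=\{1,\dots,a\}$, $R_l[x_1,\dots,x_d]=R[x_1,\dots,x_d]/(x_1^l,\dots,x_d^l)$. For $\alpha\in\mathbb{Z}_2^a$, $|\alpha|=\sum_j\alpha_j$, $\mathbb{Z}_2^{a,\mathrm{ev}}$ is the set of $\alpha$ with $|\alpha|$ even, and $\epsilon^\alpha_j=\prod_{k<j}(-1)^{\alpha_k}$ (so $\epsilon^\alpha_1=1$). For an ordered tuple $A=(i_1,\dots,i_a)$ of distinct elements of $I_d$, $r\ge0$ and $\alpha\in\mathbb{Z}_2^{a,\mathrm{ev}}$, $h^\alpha_r(A)=\sum_{r_1+\dots+r_a=(a-1)(l-1)+r,\ r_j\ge0}\prod_{j=1}^a(\epsilon^\alpha_jx_{i_j})^{r_j}$. *)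

From HB Require Import structures.
From mathcomp Require Import all_boot all_order all_algebra.
From mathcomp Require Import mpoly.
Set Implicit Arguments. Unset Strict Implicit. Unset Printing Implicit Defensive.
Import Order.TTheory GRing.Theory.
Local Open Scope ring_scope.

(* Elements of Z_2 are represented by booleans (true = 1); sum in Z_2 is addb.
   Variables x_1,...,x_d are 'X_i for i : 'I_d (0-based indexing). *)

Definition Z2even (al : seq bool) : bool := ~~ odd (count id al).

(* epsilon^alpha_j = prod_{k<j} (-1)^{alpha_k}  (j 0-based: index j <-> paper j+1) *)
Definition eps (R : comNzRingType) (al : seq bool) (j : nat) : R :=
  \prod_(k < j) (-1) ^+ nth false al k.

Definition hpoly (R : comNzRingType) (d l : nat) (al : seq bool) (r : nat)
    (A : seq 'I_d) : {mpoly R[d]} :=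
  let a := size A in
  let N := ((a.-1) * (l.-1) + r)%N in
  \sum_(t : {ffun 'I_a -> 'I_N.+1} | (\sum_(j < a) (t j : nat))%N == N)
     \prod_(j < a) (eps R al j *: 'X_(tnth (in_tuple A) j)) ^+ (t j : nat).

(* Equality in R_l[x_1..x_d] = R[x]/(x_1^l,...,x_d^l): the difference lies in
   the ideal generated by the x_i^l. *)
Definition eq_Rl (R : comNzRingType) (d l : nat) (p q : {mpoly R[d]}) : Prop :=
  exists c : 'I_d -> {mpoly R[d]}, p - q = \sum_(i < d) c i * 'X_i ^+ l.

Arguments hpoly R {d} l al r A.
Arguments eq_Rl {R d} l p q.

(* Coefficientwise: a monomial m of the product that survives in R_l, i.e. with all
   exponents below l, has a unique factorisation m = m1 m2 into a monomial m1 of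
   h^alpha_r(A) and m2 of h^beta_s(B).  Off k the exponents are forced by disjointness,
   and at k by the degrees (a-1)(l-1)+r and (b-1)(l-1)+s; the exponent left for k is
   nonnegative because the exponents on A' (resp. B') are at most l-1.
   Both sides then carry a single sign, and comparing them is a parity count: the
   variables of B' pick up the extra factor eps^gamma = (-1)^{alpha_a} eps^beta, and
   (-1)^{alpha_a} = eps^alpha_a because |alpha| is even. *)
From HB Require Import structures.
From mathcomp Require Import all_boot all_order all_algebra.
From mathcomp Require Import mpoly.
From mathcomp Require Import zify ring.
Set Implicit Arguments. Unset Strict Implicit. Unset Printing Implicit Defensive.
Import GRing.Theory.
Local Open Scope ring_scope.

Section Monomials.
Variables (R : comNzRingType) (d : nat).
Implicit Types (S : seq 'I_d) (m : 'X_{1..d}) (p q : {mpoly R[d]}).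

Definition mnm_on S m := [forall i, (i \notin S) ==> (m i == 0%N)].

Lemma mnm_onP S m : reflect (forall i, i \notin S -> m i = 0%N) (mnm_on S m).
Proof.
apply: (iffP forallP) => [mS i iS | mS i]; first exact/eqP/(implyP (mS i)).
by apply/implyP => /mS ->.
Qed.

Lemma mdeg_on S m : uniq S -> mnm_on S m -> mdeg m = (\sum_(i <- S) m i)%N.
Proof.
move=> US /mnm_onP mS; rewrite mdegE (bigID (mem S)) /= [X in (_ + X)%N]big1 ?addn0.
  by rewrite big_uniq.
by move=> i /mS.
Qed.

Lemma eq_mnm_on S T m : S =i T -> mnm_on S m = mnm_on T m.
Proof. by move=> ST; apply: eq_forallb => i; rewrite ST. Qed.

Lemma mnm_onD S m1 m2 : mnm_on S m1 -> mnm_on S m2 -> mnm_on S (m1 + m2)%MM.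
Proof. by move=> /mnm_onP m1S /mnm_onP m2S; apply/mnm_onP => i iS; rewrite mnmDE m1S ?m2S. Qed.

Lemma sub_mnm_on S T m : {subset S <= T} -> mnm_on S m -> mnm_on T m.
Proof.
by move=> ST /mnm_onP mS; apply/mnm_onP => i iT; apply: mS; apply: contra iT; apply: ST.
Qed.

Lemma sum_reduced_le (l : nat) S m : uniq S -> (forall i, m i < l)%N ->
  (\sum_(i <- S) m i <= size S * l.-1)%N.
Proof.
move=> US ml; rewrite -(card_uniqP US) -sum1_card big_distrl /= big_uniq //.
by rewrite leq_sum // => i _; rewrite mul1n -ltnS prednK // (leq_ltn_trans _ (ml i)).
Qed.

Definition mnm_split S (k : 'I_d) (N : nat) m : 'X_{1..d} :=
  [multinom if i \in S then m i
             else if i == k then (N - \sum_(j <- S) m j)%N else 0%N | i < d].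

Section Split.
Variables (S : seq 'I_d) (k : 'I_d) (N : nat).
Hypotheses (US : uniq S) (kS : k \notin S).

Lemma mnm_split_on m : mnm_on (k :: S) (mnm_split S k N m).
Proof.
by apply/mnm_onP => i; rewrite in_cons negb_or mnmE => /andP[/negbTE-> /negbTE->].
Qed.

Lemma mdeg_mnm_split m : (\sum_(j <- S) m j <= N)%N -> mdeg (mnm_split S k N m) = N.
Proof.
move=> SN; rewrite (mdeg_on _ (mnm_split_on m)) /= ?kS ?US // big_cons mnmE (negbTE kS) eqxx.
by rewrite [X in (_ + X)%N](eq_big_seq m) ?subnK // => j jS; rewrite mnmE jS.
Qed.

Lemma mnm_split_unique m m1 : mnm_on (k :: S) m1 -> mdeg m1 = N ->
  {in S, forall i, m1 i = m i} -> m1 = mnm_split S k N m.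
Proof.
move=> m1S degm1 m1m; apply/mnmP => i; rewrite mnmE; case: ifPn => [/m1m //|iS].
case: eqP => [->|/eqP ik]; last by rewrite (mnm_onP _ _ m1S) // in_cons negb_or ik.
by rewrite -degm1 (mdeg_on _ m1S) /= ?kS ?US // big_cons (eq_big_seq m) // addnK.
Qed.

End Split.

Lemma reduced_mcoeff_eq_Rl (l : nat) p q :
  (forall m, (forall i, (m i < l)%N) -> p@_m = q@_m) -> eq_Rl l p q.
Proof.
(* Every monomial of p - q has an exponent >= l somewhere; divide it by that x_i^l. *)
move=> pq_reduced; pose D := p - q.
pose big_var m := [pick i | (l <= m i)%N].
exists (fun i => \sum_(m <- msupp D | big_var m == Some i) D@_m *: 'X_[(m - U_(i) *+ l)%MM]).
rewrite -/D {1}(mpolyE D).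
under [RHS]eq_bigr => i _ do rewrite big_distrl /=.
rewrite (exchange_big_dep xpredT) //= big_seq_cond [RHS]big_seq_cond.
apply: eq_bigr => m /andP[Dm _].
case Ebig: (big_var m) => [i|]; last first.
  move: Ebig; rewrite /big_var; case: pickP => // small _.
  move: Dm; rewrite mcoeff_msupp /D mcoeffB pq_reduced ?subrr ?eqxx // => i.
  by have := small i; rewrite /= ltnNge => ->.
rewrite (big_pred1 i) => [|j /=]; last by rewrite eq_sym; apply/eqP/eqP => [[]|->].
rewrite -scalerAl mpolyXn -mpolyXD submK //; apply/mnm_lepP => j.
move: Ebig; rewrite mulmnE mnm1E /big_var; case: pickP => // i0 l_le [<-].
by case: eqP => [<-|]; rewrite ?mul1n ?mul0n.
Qed.

Lemma mcoeff_sign n p m : ((-1) ^+ n * p)@_m = (-1) ^+ n * p@_m.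
Proof. by rewrite -(rmorph_sign (@mpolyC d R)) mcoeffCM. Qed.

Lemma mcoeffM_split p q m m1 m2 : m = (m1 + m2)%MM ->
  (forall n1 n2, m = (n1 + n2)%MM -> p@_n1 != 0 -> q@_n2 != 0 -> n1 = m1) ->
  (p * q)@_m = p@_m1 * q@_m2.
Proof.
move=> Em only_m1; rewrite mcoeffM.
have m1_lt : (mdeg m1 < (mdeg m).+1)%N by rewrite ltnS Em mdegD leq_addr.
have m2_lt : (mdeg m2 < (mdeg m).+1)%N by rewrite ltnS Em mdegD leq_addl.
rewrite (bigD1 (BMultinom m1_lt, BMultinom m2_lt)) /=; last by rewrite Em.
rewrite [X in _ + X]big1 ?addr0 // => -[n1 n2] /= /andP[/eqP Emn ne].
have [->|pn1] := eqVneq p@_n1 0; first by rewrite mul0r.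
have [->|qn2] := eqVneq q@_n2 0; first by rewrite mulr0.
case/negP: ne; rewrite xpair_eqE -!val_eqE /=.
move: (val n1) (val n2) Emn pn1 qn2 => {}n1 {}n2 Emn pn1 qn2.
have E1 := only_m1 _ _ Emn pn1 qn2.
by move: Emn; rewrite Em E1 => /addmI ->; rewrite !eqxx.
Qed.

Lemma mcoeffM_eq0 p q m :
  (forall n1 n2, m = (n1 + n2)%MM -> p@_n1 != 0 -> q@_n2 != 0 -> False) ->
  (p * q)@_m = 0.
Proof.
move=> no_split; rewrite mcoeffM big1 // => -[n1 n2] /= /eqP Emn.
have [->|pn1] := eqVneq p@_n1 0; first by rewrite mul0r.
have [->|qn2] := eqVneq q@_n2 0; first by rewrite mulr0.
by case: (no_split _ _ Emn pn1 qn2).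
Qed.

Definition mnm_at (A : seq 'I_d) (t : 'I_(size A) -> nat) : 'X_{1..d} :=
  (\sum_(j < size A) U_(tnth (in_tuple A) j) *+ t j)%MM.

Section MonomialAt.
Variables (A : seq 'I_d) (t : 'I_(size A) -> nat).

Lemma mnm_atE i : mnm_at t i = (\sum_(j < size A) (tnth (in_tuple A) j == i) * t j)%N.
Proof. by rewrite mnm_sumE; apply: eq_bigr => j _; rewrite mulmnE mnm1E mulnC. Qed.

Lemma mnm_at_on : mnm_on A (mnm_at t).
Proof.
apply/mnm_onP => i Ai; rewrite mnm_atE big1 // => j _.
by case: eqP => // Ei; rewrite -Ei mem_tnth in Ai.
Qed.

Lemma mnm_at_tnth j : uniq A -> mnm_at t (tnth (in_tuple A) j) = t j.
Proof.
move=> UA; rewrite mnm_atE (bigD1 j) //= eqxx mul1n big1 ?addn0 // => j' j'j.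
by case: eqP => // /(@tuple_uniqP _ _ (in_tuple A) UA) Ej; rewrite Ej eqxx in j'j.
Qed.

Lemma mdeg_mnm_at : mdeg (mnm_at t) = (\sum_(j < size A) t j)%N.
Proof. by rewrite mdeg_sum; apply: eq_bigr => j _; rewrite mdegMn mdeg1 mul1n. Qed.

Lemma prod_scale_mnm_at (c : 'I_(size A) -> R) :
  \prod_(j < size A) (c j *: 'X_(tnth (in_tuple A) j)) ^+ t j
  = (\prod_(j < size A) c j ^+ t j) *: ('X_[mnm_at t] : {mpoly R[d]}).
Proof. by under eq_bigr do rewrite exprZn; rewrite scaler_prod mprodXnE. Qed.

End MonomialAt.

Lemma mcoeff_hpoly (l : nat) (al : seq bool) (r : nat) (A : seq 'I_d) m : uniq A ->
  (hpoly R l al r A)@_m =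
  if (mdeg m == ((size A).-1 * l.-1 + r)%N) && mnm_on A m
  then \prod_(i <- A) eps R al (index i A) ^+ m i else 0.
Proof.
move=> UA; rewrite /hpoly raddf_sum /=.
under eq_bigr do rewrite prod_scale_mnm_at mcoeffZ mcoeffX.
set N := (_ + r)%N; set At := tnth (in_tuple A).
case: ifP => [/andP[/eqP degm mA]|bad_m]; last first.
  rewrite big1 // => t /eqP degt; case: eqP => [mt|_]; last by rewrite mulr0.
  by rewrite -mt mdeg_mnm_at degt eqxx mnm_at_on in bad_m.
have m_le j : (m (At j) < N.+1)%N.
  by rewrite ltnS -degm mdegE (bigD1 (At j)) //= leq_addr.
pose t0 : {ffun 'I_(size A) -> 'I_N.+1} := [ffun j => inord (m (At j))].
have t0E j : t0 j = m (At j) :> nat by rewrite ffunE inordK.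
have mnm_t0 : mnm_at (fun j => t0 j : nat) = m.
  apply/mnmP => i; case: (boolP (i \in A)) => Ai.
    by have /tnthP[j ->] : i \in in_tuple A by []; rewrite mnm_at_tnth // t0E.
  by rewrite (mnm_onP _ _ (mnm_at_on _)) // (mnm_onP _ _ mA).
have sum_t0 : (\sum_(j < size A) t0 j)%N == N.
  by rewrite -mdeg_mnm_at mnm_t0 degm.
rewrite (bigD1 t0) //= mnm_t0 eqxx mulr1 [X in _ + X]big1 ?addr0; last first.
  move=> t /andP[_ tt0]; case: eqP => [mt|_]; last by rewrite mulr0.
  case/eqP: tt0; apply/ffunP => j; apply: val_inj.
  by rewrite /= t0E -mt mnm_at_tnth.
rewrite [RHS]big_tnth; apply: eq_bigr => j _.
by rewrite t0E /At (tnth_nth (At j)) index_uniq.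
Qed.

Lemma mcoeff_hpoly_neq0 (l : nat) (al : seq bool) (r : nat) (A : seq 'I_d) m : uniq A ->
  (hpoly R l al r A)@_m != 0 -> (mdeg m == ((size A).-1 * l.-1 + r)%N) && mnm_on A m.
Proof. by move=> UA; rewrite mcoeff_hpoly //; case: ifP => //; rewrite eqxx. Qed.

End Monomials.

Section Signs.
Variable R : comNzRingType.
Implicit Types (s : seq bool) (n j : nat).

Lemma eps_count s n : eps R s n = (-1) ^+ count id (take n s).
Proof.
elim: n => [|n IHn]; first by rewrite /eps big_ord0 take0.
rewrite /eps big_ord_recr /= -/(eps R s n) IHn.
case: (ltnP n (size s)) => [ns|sn]; last first.
  by rewrite !take_oversize ?(leq_trans sn) // nth_default // mulr1.
by rewrite (take_nth false ns) -cats1 count_cat exprD /= addn0; case: nth.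
Qed.

Lemma eps0 s : eps R s 0 = 1.
Proof. by rewrite /eps big_ord0. Qed.

Lemma eps_take s n j : (j <= n)%N -> eps R (take n s) j = eps R s j.
Proof. by move=> jn; rewrite !eps_count take_takel. Qed.

Lemma eps_catl s1 s2 j : (j <= size s1)%N -> eps R (s1 ++ s2) j = eps R s1 j.
Proof. by move=> js1; rewrite !eps_count takel_cat. Qed.

Lemma eps_catr s1 s2 j : eps R (s1 ++ s2) (size s1 + j) = eps R s1 (size s1) * eps R s2 j.
Proof. by rewrite !eps_count take_cat ltnNge leq_addr addKn take_size count_cat exprD. Qed.

Lemma eps_last s n : size s = n.+1 -> Z2even s -> eps R s n = (-1) ^+ nth false s n.
Proof.
move=> sn; rewrite /Z2even eps_count -signr_odd.
rewrite -[s in count _ s]take_size sn (take_nth false) ?sn // -cats1 count_cat /= addn0 oddD.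
by case: (odd _); case: nth.
Qed.

End Signs.

Section Concatenation.
Variables (R : comNzRingType) (d l r s : nat) (A B : seq 'I_d) (k : 'I_d).
Hypotheses (UA : uniq A) (UB : uniq B) (kA : k \notin A) (kB : k \notin B).
Hypothesis AB : {in A, forall i, i \notin B}.

Let NA := (size A * l.-1 + r)%N.
Let NB := (size B * l.-1 + s)%N.
Let C := A ++ k :: B.

Let BA : {in B, forall i, i \notin A}.
Proof. by move=> i iB; apply: contraL iB => /AB. Qed.

Let memA_kB i : i \in A -> i \notin k :: B.
Proof. by move=> iA; rewrite in_cons negb_or AB // andbT; apply: contraNneq kA => <-. Qed.

Let memB_kA i : i \in B -> i \notin k :: A.
Proof. by move=> iB; rewrite in_cons negb_or BA // andbT; apply: contraNneq kB => <-. Qed.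

Lemma uniq_cat_cons : uniq C.
Proof.
rewrite cat_uniq UA /= kB UB negb_or kA !andbT.
by apply/hasPn => i /BA.
Qed.

Lemma mdeg_on_cat m : mnm_on C m ->
  mdeg m = (\sum_(i <- A) m i + m k + \sum_(i <- B) m i)%N.
Proof. by move=> mC; rewrite (mdeg_on uniq_cat_cons mC) big_cat big_cons /= addnA. Qed.

Lemma mnm_on_cat m1 m2 : mnm_on (k :: A) m1 -> mnm_on (k :: B) m2 -> mnm_on C (m1 + m2)%MM.
Proof.
move=> m1A m2B; apply: mnm_onD; [apply: sub_mnm_on m1A | apply: sub_mnm_on m2B];
  by move=> i; rewrite !(in_cons, mem_cat) => /orP[] ->; rewrite ?orbT.
Qed.

Lemma mnm_split_catE m1 m2 : mnm_on (k :: A) m1 -> mdeg m1 = NA ->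
    mnm_on (k :: B) m2 -> mdeg m2 = NB ->
  m1 = mnm_split A k NA (m1 + m2) /\ m2 = mnm_split B k NB (m1 + m2).
Proof.
move=> m1A dm1 m2B dm2; split; apply: mnm_split_unique => // i iX; rewrite mnmDE.
  by rewrite (mnm_onP _ _ m2B i) ?addn0 ?memA_kB.
by rewrite (mnm_onP _ _ m1A i) ?memB_kA.
Qed.

Lemma mnm_split_catK m : mnm_on C m -> mdeg m = (NA + NB)%N ->
    (\sum_(i <- A) m i <= NA)%N -> (\sum_(i <- B) m i <= NB)%N ->
  m = (mnm_split A k NA m + mnm_split B k NB m)%MM.
Proof.
move=> mC dm SA SB; apply/mnmP => i; rewrite mnmDE !mnmE.
have [iA|iNA] := boolP (i \in A).
  by rewrite (negbTE (AB iA)) ifN ?addn0 //; apply: contraNneq kA => <-.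
have [iB|iNB] := boolP (i \in B); first by rewrite ifN //; apply: contraNneq kB => <-.
case: eqP => [->|/eqP ik]; first by have := mdeg_on_cat mC; rewrite dm; lia.
by rewrite (mnm_onP _ _ mC) // mem_cat in_cons (negbTE iNA) (negbTE ik) (negbTE iNB).
Qed.

Let UAk : uniq (rcons A k). Proof. by rewrite rcons_uniq kA UA. Qed.
Let UkB : uniq (k :: B). Proof. by rewrite /= kB UB. Qed.

Let hpoly_supp (al be : seq bool) n1 n2 :
    (hpoly R l al r (rcons A k))@_n1 != 0 -> (hpoly R l be s (k :: B))@_n2 != 0 ->
  [/\ mnm_on (k :: A) n1, mdeg n1 = NA, mnm_on (k :: B) n2 & mdeg n2 = NB].
Proof.
move=> /(mcoeff_hpoly_neq0 UAk) /andP[/eqP d1 on1] /(mcoeff_hpoly_neq0 UkB) /andP[/eqP d2 on2].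
by rewrite -(eq_mnm_on _ (mem_rcons A k)) d1 d2 size_rcons.
Qed.

Let sum_le_NA (m : 'X_{1..d}) : (forall i, m i < l)%N -> (\sum_(i <- A) m i <= NA)%N.
Proof. by move=> m_red; apply: leq_trans (sum_reduced_le UA m_red) (leq_addr _ _). Qed.

Let sum_le_NB (m : 'X_{1..d}) : (forall i, m i < l)%N -> (\sum_(i <- B) m i <= NB)%N.
Proof. by move=> m_red; apply: leq_trans (sum_reduced_le UB m_red) (leq_addr _ _). Qed.

Lemma mcoeff_hpoly_mul_cat (al be : seq bool) (m : 'X_{1..d}) : (forall i, m i < l)%N ->
  (hpoly R l al r (rcons A k) * hpoly R l be s (k :: B))@_m =
  if (mdeg m == NA + NB)%N && mnm_on C m then
    \prod_(i <- rcons A k) eps R al (index i (rcons A k)) ^+ mnm_split A k NA m i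
    * \prod_(i <- k :: B) eps R be (index i (k :: B)) ^+ mnm_split B k NB m i
  else 0.
Proof.
move=> m_red; case: ifP => [/andP[/eqP dm mC]|bad]; last first.
  apply: mcoeffM_eq0 => n1 n2 Emn /hpoly_supp h /h[on1 d1 on2 d2].
  by move: bad; rewrite Emn mdegD d1 d2 eqxx mnm_on_cat.
rewrite (mcoeffM_split (m1 := mnm_split A k NA m) (m2 := mnm_split B k NB m)).
- rewrite !mcoeff_hpoly // size_rcons (eq_mnm_on _ (mem_rcons A k)) /=.
  by rewrite !mdeg_mnm_split ?mnm_split_on ?(sum_le_NA m_red) ?(sum_le_NB m_red) ?eqxx.
- exact: mnm_split_catK mC dm (sum_le_NA m_red) (sum_le_NB m_red).
move=> n1 n2 Emn /hpoly_supp h /h[on1 d1 on2 d2].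
by rewrite Emn; case: (mnm_split_catE on1 d1 on2 d2).
Qed.

Let index_rcons_A i : i \in A -> index i (rcons A k) = index i A.
Proof. by move=> iA; rewrite -cats1 index_cat iA. Qed.

Let index_rcons_k : index k (rcons A k) = size A.
Proof. by rewrite -cats1 index_cat (negbTE kA) /= eqxx addn0. Qed.

Variables (al be : seq bool) (x : bool).
Hypotheses (sal : size al = (size A).+1) (sbe : size be = (size B).+1).

(* The last entry [x] of gamma is irrelevant: no variable of A ++ k :: B has that index. *)
Let ga := take (size A) al ++ take (size B) be ++ [:: x].

Let size_take_al : size (take (size A) al) = size A.
Proof. by rewrite size_takel // sal. Qed.

Lemma eps_index_catA i : i \in A -> eps R ga (index i C) = eps R al (index i (rcons A k)).
Proof.
move=> iA; rewrite index_cat iA index_rcons_A //.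
by rewrite eps_catl ?eps_take ?size_take_al ?index_size.
Qed.

Lemma eps_index_catk : eps R ga (index k C) = eps R al (size A).
Proof. by rewrite index_cat (negbTE kA) index_head addn0 eps_catl ?eps_take ?size_take_al. Qed.

Lemma eps_index_catB i : i \in B ->
  eps R ga (index i C) = eps R al (size A) * eps R be (index i (k :: B)).
Proof.
move=> iB; have iB_lt : (index i (k :: B) <= size B)%N.
  by rewrite /= ifN ?index_mem //; apply: contraNneq kB => ->.
rewrite index_cat (negbTE (BA iB)) -{1}size_take_al eps_catr size_take_al eps_take //.
by rewrite eps_catl ?eps_take ?size_takel ?sbe.
Qed.

Lemma prod_eps_split_cat (m : 'X_{1..d}) : Z2even al -> (forall i, m i < l)%N ->
    mnm_on C m -> mdeg m = (NA + NB)%N ->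
  \prod_(i <- rcons A k) eps R al (index i (rcons A k)) ^+ mnm_split A k NA m i
  * \prod_(i <- k :: B) eps R be (index i (k :: B)) ^+ mnm_split B k NB m i
  = (-1) ^+ (nth false al (size A) * NB) * \prod_(i <- C) eps R ga (index i C) ^+ m i.
Proof.
move=> al_even m_red mC dm; set t := eps R al (size A).
have SA := sum_le_NA m_red.
have prodA : \prod_(i <- A) eps R al (index i (rcons A k)) ^+ mnm_split A k NA m i
           = \prod_(i <- A) eps R ga (index i C) ^+ m i.
  by apply: eq_big_seq => i iA; rewrite mnmE iA eps_index_catA.
have prodB : \prod_(i <- B) eps R ga (index i C) ^+ m i
           = t ^+ (\sum_(i <- B) m i)
             * \prod_(i <- B) eps R be (index i (k :: B)) ^+ mnm_split B k NB m i.
  rewrite -prodrXr -big_split; apply: eq_big_seq => i iB.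
  by rewrite mnmE iB eps_index_catB // exprMn.
have t_sign : t = (-1) ^+ nth false al (size A) by apply: eps_last.
have t_exp : t ^+ (NA - \sum_(i <- A) m i)
           = t ^+ NB * (t ^+ m k * t ^+ (\sum_(i <- B) m i)).
  have := mdeg_on_cat mC; rewrite dm -!exprD => deg_m.
  have -> : (NB + (m k + \sum_(i <- B) m i) = (NA - \sum_(i <- A) m i) + NB * 2)%N by lia.
  by rewrite exprD mulnC exprM t_sign sqrr_sign expr1n mulr1.
rewrite big_rcons big_cons big_cat big_cons index_head /= prodA prodB eps_index_catk -/t.
rewrite index_rcons_k eps0 expr1n mul1r mnmE (negbTE kA) eqxx t_exp.
by rewrite exprM -t_sign; ring.
Qed.

End Concatenation.

Theorem mainTheorem13 (R : comNzRingType) (d l : nat) (A' : seq 'I_d) (k : 'I_d)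
    (B' : seq 'I_d) (al be : seq bool) (r s : nat) :
  (1 <= d)%N -> (1 <= l)%N ->
  uniq (rcons A' k) -> uniq (k :: B') ->
  (forall x, x \in rcons A' k -> x \in k :: B' -> x = k) ->
  size al = size (rcons A' k) -> Z2even al ->
  size be = size (k :: B') -> Z2even be ->
  let a := size (rcons A' k) in
  let b := size (k :: B') in
  let ga := take a.-1 al ++ take b.-1 be
            ++ [:: addb (nth false be b.-1) (nth false al a.-1)] in
  eq_Rl l
    (hpoly R l al r (rcons A' k) * hpoly R l be s (k :: B'))
    ((-1) ^+ (nth false al a.-1 * ((b.-1) * (l.-1) + s))%N
       * hpoly R l ga (r + s) (A' ++ k :: B')).
Proof.
move=> _ _ UAk UkB AkB sal al_even sbe _ a b ga.
rewrite {}/ga {}/a {}/b size_rcons /= in sal sbe *.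
move: UAk UkB; rewrite rcons_uniq /= => /andP[kA UA] /andP[kB UB].
have AB : {in A', forall i, i \notin B'}.
  move=> i iA; apply: contraNN kA => iB.
  by rewrite -(AkB i) ?mem_rcons ?in_cons ?iA ?iB ?orbT.
have UC := uniq_cat_cons UA UB kA kB AB.
have degC : ((size (A' ++ k :: B')).-1 * l.-1 + (r + s)
            = (size A' * l.-1 + r) + (size B' * l.-1 + s))%N.
  by rewrite size_cat /= addnS mulnDl; lia.
apply: reduced_mcoeff_eq_Rl => m m_red.
rewrite mcoeff_sign mcoeff_hpoly_mul_cat // mcoeff_hpoly // degC.
case: ifP => [/andP[/eqP dm mC]|_]; last by rewrite mulr0.
exact: prod_eps_split_cat.
Qed.
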